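(* Let ${\mathbf{x}}^* \in \mathbb{R}^n$ with ${\mathbf{x}}^* \geq 0$ componentwise, and let $\mathcal{J} = \mathrm{supp}({\mathbf{x}}^* )$, so ${\mathbf{x}}^* = \sum_{j\in\mathcal{J}} x_j^* {\mathbf{e}}_j$. Assume there exists a vector ${\mathbf{c}} \in \mathbb{R}^n$ such that $$\frac{P {\mathbf{e}}_j}{\| P {\mathbf{e}}_j \|_2} \cdot {\mathbf{c}} = 1 \quad \forall j \in \mathcal{J}, \qquad \frac{P {\mathbf{e}}_i}{\| P {\mathbf{e}}_i \|_2} \cdot {\mathbf{c}} < 1 \quad \forall i \in \mathcal{J}^c.$$ Let $s \in [\|{\mathbf{x}}^*\|_\infty, \infty]$. Then every solution ${\mathbf{y}}$ of $$\min_{0 \leq {\mathbf{x}} \leq s} \| W {\mathbf{x}} \|_1 \quad \text{subject to} \quad A {\mathbf{x}} = A {\mathbf{x}}^* \qquad (\ast)$$ satisfies $\mathrm{supp}({\mathbf{y}}) \subseteq \mathrm{supp}({\mathbf{x}}^* )$. Moreover, ${\mathbf{x}}^*$ is a solution of $(\ast)$.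
   Context: $A \in \mathbb{R}^{m\times n}$ is a matrix, $A^\dagger$ its Moore–Penrose pseudoinverse, and $P = A^\dagger A$ the orthogonal projection of $\mathbb{R}^n$ onto $\mathcal{N}(A)^\perp$. ${\mathbf{e}}_1,\dots,{\mathbf{e}}_n$ are the standard unit vectors, and it is assumed that no ${\mathbf{e}}_i$ lies in $\mathcal{N}(A)$, so $w_i := \|P{\mathbf{e}}_i\|_2 > 0$ for all $i$. $W = \mathrm{diag}(w_1,\dots,w_n)$. The constraint $0 \le {\mathbf{x}} \le s$ is componentwise; $s=\infty$ means only ${\mathbf{x}}\ge 0$ is imposed. $\mathcal{J}^c$ denotes the complement of $\mathcal{J}$ in $\{1,\dots,n\}$. *)

From HB Require Import structures.
From mathcomp Require Import all_boot all_order all_algebra.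
From mathcomp Require Import reals constructive_ereal.
Set Implicit Arguments. Unset Strict Implicit. Unset Printing Implicit Defensive.
Import Order.TTheory GRing.Theory Num.Theory.
Local Open Scope ring_scope.

Definition is_MP_pinv (R : realType) (m n : nat)
  (A : 'M[R]_(m, n)) (Ad : 'M[R]_(n, m)) : Prop :=
  [/\ A *m Ad *m A = A, Ad *m A *m Ad = Ad,
      (A *m Ad)^T = A *m Ad & (Ad *m A)^T = Ad *m A].

Definition norm2 (R : realType) (n : nat) (v : 'cV[R]_n) : R :=
  Num.sqrt (\sum_(k < n) v k 0 ^+ 2).

Definition dotv (R : realType) (n : nat) (u v : 'cV[R]_n) : R :=
  \sum_(k < n) u k 0 * v k 0.

Definition evec (R : realType) (n : nat) (i : 'I_n) : 'cV[R]_n :=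
  \col_(k < n) (if k == i then 1 else 0).

Definition wt (R : realType) (n : nat) (P : 'M[R]_n) (i : 'I_n) : R :=
  norm2 (P *m evec R i).

Definition wl1 (R : realType) (n : nat) (P : 'M[R]_n) (x : 'cV[R]_n) : R :=
  \sum_(i < n) `|wt P i * x i 0|.

Definition infnorm (R : realType) (n : nat) (x : 'cV[R]_n) : R :=
  \big[Num.max/0]_(i < n) `|x i 0|.

Definition supp (R : realType) (n : nat) (x : 'cV[R]_n) : {set 'I_n} :=
  [set i | x i 0 != 0].

Definition feasible (R : realType) (m n : nat) (A : 'M[R]_(m, n))
  (b : 'cV[R]_m) (s : \bar R) (x : 'cV[R]_n) : Prop :=
  A *m x = b /\ forall i, 0 <= x i 0 /\ ((x i 0)%:E <= s)%E.

Definition is_solution (R : realType) (m n : nat) (A : 'M[R]_(m, n))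
  (Ad : 'M[R]_(n, m)) (b : 'cV[R]_m) (s : \bar R) (y : 'cV[R]_n) : Prop :=
  feasible A b s y /\
  forall z, feasible A b s z -> wl1 (Ad *m A) y <= wl1 (Ad *m A) z.

From mathcomp Require Import all_boot all_order all_algebra.
From mathcomp Require Import reals constructive_ereal.
Import Order.TTheory GRing.Theory Num.Theory.
Set Implicit Arguments. Unset Strict Implicit.
Local Open Scope ring_scope.

(* Write g := P^T c, so that g_i = w_i (P e_i / w_i . c); the hypotheses say
   g_i = w_i on J and g_i < w_i off J.  For any nonnegative feasible z,
   sum_i g_i z_i = P z . c = P x* . c = sum_i w_i x*_i = ||W x*||_1, because
   P z = A^+ A z depends on z only through A z.  Hence
   ||W z||_1 = sum_i w_i z_i >= sum_i g_i z_i = ||W x*||_1, and equality forces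
   z_i = 0 wherever g_i < w_i, i.e. off J. *)

Lemma dotvE (R : realType) (n : nat) (u v : 'cV[R]_n) :
  dotv u v = (u^T *m v) 0 0.
Proof. by rewrite mxE; apply: eq_bigr => k _; rewrite mxE. Qed.

Lemma dotvZl (R : realType) (n : nat) (a : R) (u v : 'cV[R]_n) :
  dotv (a *: u) v = a * dotv u v.
Proof. by rewrite !dotvE linearZ /= -scalemxAl mxE. Qed.

Lemma dotv_mulmxl (R : realType) (m n : nat) (M : 'M[R]_(m, n))
    (u : 'cV[R]_n) (v : 'cV[R]_m) :
  dotv (M *m u) v = dotv u (M^T *m v).
Proof. by rewrite !dotvE trmx_mul mulmxA. Qed.

Lemma dotv_evecl (R : realType) (n : nat) (i : 'I_n) (v : 'cV[R]_n) :
  dotv (evec R i) v = v i 0.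
Proof.
rewrite /dotv (bigD1 i) //= mxE eqxx mul1r big1 ?addr0 // => k /negbTE ki.
by rewrite mxE ki mul0r.
Qed.

Lemma norm2_eq0 (R : realType) (n : nat) (v : 'cV[R]_n) :
  norm2 v = 0 -> v = 0.
Proof.
move=> /eqP; rewrite sqrtr_eq0 => sum_le0.
have sum_eq0 : \sum_(k < n) v k 0 ^+ 2 = 0.
  by apply/eqP; rewrite eq_le sum_le0 sumr_ge0 // => k _; rewrite sqr_ge0.
apply/matrixP => k j; rewrite (ord1 j) mxE.
apply/eqP; rewrite -sqrf_eq0; apply/eqP.
by apply: (psumr_eq0P _ sum_eq0) => // l _; rewrite sqr_ge0.
Qed.

(* A e_i = A (P e_i), so P e_i = 0 would give A e_i = 0. *)
Lemma wt_gt0 (R : realType) (m n : nat) (A : 'M[R]_(m, n)) Ad (i : 'I_n) :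
  is_MP_pinv A Ad -> A *m evec R i != 0 -> 0 < wt (Ad *m A) i.
Proof.
case=> AAdA _ _ _ Aei_neq0; rewrite lt_def sqrtr_ge0 andbT.
apply: contra Aei_neq0 => /eqP /norm2_eq0 Pei_eq0.
by rewrite -AAdA -!mulmxA (mulmxA Ad A) Pei_eq0 !mulmx0.
Qed.

Lemma wt_mul_normalized_dotv (R : realType) (n : nat) (P : 'M[R]_n)
    (c : 'cV[R]_n) (i : 'I_n) :
  wt P i != 0 ->
  wt P i * dotv ((wt P i)^-1 *: (P *m evec R i)) c = (P^T *m c) i 0.
Proof.
by move=> w_neq0; rewrite dotvZl mulrA mulfV // mul1r dotv_mulmxl dotv_evecl.
Qed.

Lemma wl1_ge0E (R : realType) (n : nat) (P : 'M[R]_n) (z : 'cV[R]_n) :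
  (forall i, 0 <= z i 0) -> wl1 P z = \sum_i wt P i * z i 0.
Proof.
by move=> z_ge0; apply: eq_bigr => i _; rewrite ger0_norm ?mulr_ge0 ?sqrtr_ge0.
Qed.

Lemma infnorm_ge (R : realType) (n : nat) (x : 'cV[R]_n) (i : 'I_n) :
  x i 0 <= infnorm x.
Proof.
exact: le_trans (ler_norm _) (le_bigmax (0 : R) (fun k => `|x k 0|) i).
Qed.

Section WeightedSum.
Variables (R : realDomainType) (I : finType) (g w z : I -> R).
Hypotheses (g_le_w : forall i, g i <= w i) (z_ge0 : forall i, 0 <= z i).

Let gap_ge0 i : 0 <= w i * z i - g i * z i.
Proof. by rewrite -mulrBl mulr_ge0 // subr_ge0. Qed.

Lemma ler_sum_weights : \sum_i g i * z i <= \sum_i w i * z i.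
Proof. by rewrite -subr_ge0 -sumrB sumr_ge0. Qed.

Lemma eq_sum_weights_zero i :
  \sum_i w i * z i <= \sum_i g i * z i -> g i < w i -> z i = 0.
Proof.
move=> sum_le g_lt_w.
have gaps_eq0 : \sum_j (w j * z j - g j * z j) = 0.
  by apply/eqP; rewrite eq_le sumr_ge0 // andbT sumrB subr_le0.
have /eqP := psumr_eq0P (fun j _ => gap_ge0 j) gaps_eq0 (i := i) isT.
by rewrite -mulrBl mulf_eq0 subr_eq0 (gt_eqF g_lt_w) => /eqP.
Qed.

End WeightedSum.

Lemma sum_projT_mul_eq (R : realType) (m n : nat) (A : 'M[R]_(m, n))
    (Ad : 'M[R]_(n, m)) (c y z : 'cV[R]_n) :
  A *m y = A *m z ->
  \sum_i ((Ad *m A)^T *m c) i 0 * y i 0 = \sum_i ((Ad *m A)^T *m c) i 0 * z i 0.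
Proof.
move=> Ay_Az; have sumE (x : 'cV[R]_n) :
    \sum_i ((Ad *m A)^T *m c) i 0 * x i 0 = dotv (Ad *m (A *m x)) c.
  by rewrite mulmxA dotv_mulmxl; apply: eq_bigr => i _; rewrite mulrC.
by rewrite !sumE Ay_Az.
Qed.

Theorem theorem1 (R : realType) (m n : nat) (A : 'M[R]_(m, n))
  (Ad : 'M[R]_(n, m)) (xs c : 'cV[R]_n) (s : \bar R) :
  is_MP_pinv A Ad ->
  (forall i : 'I_n, A *m evec R i != 0) ->
  (forall i, 0 <= xs i 0) ->
  (forall j, j \in supp xs ->
     dotv ((wt (Ad *m A) j)^-1 *: ((Ad *m A) *m evec R j)) c = 1) ->
  (forall i, i \notin supp xs ->
     dotv ((wt (Ad *m A) i)^-1 *: ((Ad *m A) *m evec R i)) c < 1) ->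
  ((infnorm xs)%:E <= s)%E ->
  (forall y, is_solution A Ad (A *m xs) s y -> supp y \subset supp xs)
  /\ is_solution A Ad (A *m xs) s xs.
Proof.
move=> MP Aei_neq0 xs_ge0 dot_eq1 dot_lt1 xs_le_s.
set P := Ad *m A; set g := fun i => (P^T *m c) i 0; set w := wt P.
have w_gt0 i : 0 < w i by exact: wt_gt0.
have gE i : g i = w i * dotv ((w i)^-1 *: (P *m evec R i)) c.
  by rewrite wt_mul_normalized_dotv ?gt_eqF.
have g_eq_w i : i \in supp xs -> g i = w i.
  by move=> /dot_eq1; rewrite gE => ->; rewrite mulr1.
have g_lt_w i : i \notin supp xs -> g i < w i.
  by move=> /dot_lt1 lt1; rewrite gE -[ltRHS]mulr1 ltr_pM2l.
have g_le_w i : g i <= w i.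
  by case: (boolP (i \in supp xs)) => [/g_eq_w -> | /g_lt_w /ltW].
have xs_sum : \sum_i g i * xs i 0 = \sum_i w i * xs i 0.
  apply: eq_bigr => i _; case: (boolP (i \in supp xs)) => [/g_eq_w -> // |].
  by rewrite inE negbK => /eqP ->; rewrite !mulr0.
have lower_bound (z : 'cV[R]_n) : feasible A (A *m xs) s z ->
    wl1 P xs = \sum_i g i * z i 0 /\ \sum_i g i * z i 0 <= wl1 P z.
  case=> Az z_bounds; have z_ge0 i : 0 <= z i 0 by case: (z_bounds i).
  rewrite !wl1_ge0E // -xs_sum -(sum_projT_mul_eq _ _ Az).
  by split=> //; apply: ler_sum_weights.
have xs_feasible : feasible A (A *m xs) s xs.
  split=> // i; split=> //.
  by apply: le_trans xs_le_s; rewrite lee_fin infnorm_ge.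
have xs_solution : is_solution A Ad (A *m xs) s xs.
  by split=> // z /lower_bound [-> ->].
split=> // y [y_feasible y_min]; apply/subsetP => i; apply: contraLR => i_notin.
have y_ge0 j : 0 <= y j 0 by case: (y_feasible.2 j).
have [opt _] := lower_bound y y_feasible.
have := y_min _ xs_feasible; rewrite opt wl1_ge0E // => y_le.
by rewrite inE negbK (eq_sum_weights_zero g_le_w y_ge0 y_le (g_lt_w i i_notin)).
Qed.
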